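(* Assume the standing model below. Let $\mathbf{a}\in(0,\infty)^n$, let $\mathbf{x}=\mathbf{x}^*(\mathbf{a})=(\mathbf{s};\mathbf{r})$, and let $$v_i=a_i+\sum_j M^s_{ij}s_j+\sum_j M^d_{ij}r_j$$ be the total asset value of firm $i$. Suppose $v_i\neq d_i$ for all $i=1,\dots,n$, and define the solvency vector $\boldsymbol{\xi}\in\{0,1\}^n$ by $\xi_i=1$ if $v_i>d_i$ and $\xi_i=0$ otherwise. Then: 1. The matrix $$\mathbf{I}_{2n}-\operatorname{diag}\big((\boldsymbol{\xi};\mathbf{1}-\boldsymbol{\xi})\big)\begin{pmatrix}\mathbf{M}^s&\mathbf{M}^d\\ \mathbf{M}^s&\mathbf{M}^d\end{pmatrix}$$ is invertible. 2. $\mathbf{x}^*$ is differentiable at $\mathbf{a}$, with $2n\times n$ Jacobian $$\frac{\partial \mathbf{x}^*}{\partial \mathbf{a}}(\mathbf{a})=\left[\mathbf{I}_{2n}-\operatorname{diag}\big((\boldsymbol{\xi};\mathbf{1}-\boldsymbol{\xi})\big)\begin{pmatrix}\mathbf{M}^s&\mathbf{M}^d\\ \mathbf{M}^s&\mathbf{M}^d\end{pmatrix}\right]^{-1}\begin{pmatrix}\operatorname{diag}(\boldsymbol{\xi})\\ \operatorname{diag}(\mathbf{1}-\boldsymbol{\xi})\end{pmatrix}.$$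
   Context: Standing model (network valuation with cross-holdings). There are $n$ firms. Cross-holding matrices. $\mathbf{M}^s,\mathbf{M}^d\in\mathbb{R}^{n\times n}$ are matrices of equity and debt cross-holding fractions: firm $i$ holds fraction $M^s_{ij}$ of firm $j$'s equity and fraction $M^d_{ij}$ of firm $j$'s debt. They satisfy: - $M^s_{ii}=M^d_{ii}=0$ for all $i$; - $M^s_{ij},M^d_{ij}\ge 0$ for all $i,j$; - $\sum_i M^s_{ij}<1$ and $\sum_i M^d_{ij}<1$ for every $j$. Asset and debt data. Firm $i$ has external asset value $a_i>0$ and nominal debt $d_i>0$ (fixed). Fixed-point map. For $\mathbf{x}=(\mathbf{s};\mathbf{r})\in\mathbb{R}^{2n}$ (equity values $\mathbf{s}$ stacked over debt recovery values $\mathbf{r}$), define $\mathbf{g}=(g^s_1,\dots,g^s_n,g^r_1,\dots,g^r_n)$ by $$g^s_i(\mathbf{a},\mathbf{x})=\max\Big\{0,\;a_i+\sum_j M^s_{ij}s_j+\sum_j M^d_{ij}r_j-d_i\Big\},$$ $$g^r_i(\mathbf{a},\mathbf{x})=\min\Big\{d_i,\;a_i+\sum_j M^s_{ij}s_j+\sum_j M^d_{ij}r_j\Big\}.$$ For every $\mathbf{a}\in(0,\infty)^n$ the equation $\mathbf{x}=\mathbf{g}(\mathbf{a},\mathbf{x})$ has a unique (nonnegative) solution, denoted $\mathbf{x}^*(\mathbf{a})=(\mathbf{s}^*(\mathbf{a});\mathbf{r}^*(\mathbf{a}))$. Notation. $(\mathbf{u};\mathbf{w})$ denotes row-wise stacking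 of vectors, and $\operatorname{diag}(\mathbf{u})$ denotes the diagonal matrix with diagonal $\mathbf{u}$. *)

From HB Require Import structures.
From mathcomp Require Import all_boot all_order all_algebra.
From mathcomp Require Import all_classical all_reals all_analysis.
Set Implicit Arguments. Unset Strict Implicit. Unset Printing Implicit Defensive.
Import Order.TTheory GRing.Theory Num.Theory.
Local Open Scope ring_scope.

(* Vectors are row vectors: a : 'rV_n, x = (s ; r) : 'rV_(n + n) with
   s = lsubmx x (equity values) and r = rsubmx x (debt recovery values). *)

Definition crossholding (R : realType) (n : nat) (M : 'M[R]_n) : Prop :=
  (forall i, M i i = 0) /\ (forall i j, 0 <= M i j) /\
  (forall j, \sum_i M i j < 1).

Definition totval (R : realType) (n : nat) (Ms Md : 'M[R]_n) (a : 'rV[R]_n)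
  (x : 'rV[R]_(n + n)) (i : 'I_n) : R :=
  a 0 i + \sum_j Ms i j * lsubmx x 0 j + \sum_j Md i j * rsubmx x 0 j.

Definition gmap (R : realType) (n : nat) (Ms Md : 'M[R]_n) (d a : 'rV[R]_n)
  (x : 'rV[R]_(n + n)) : 'rV[R]_(n + n) :=
  row_mx (\row_i Num.max 0 (totval Ms Md a x i - d 0 i))
         (\row_i Num.min (d 0 i) (totval Ms Md a x i)).

Definition solv (R : realType) (n : nat) (Ms Md : 'M[R]_n) (d a : 'rV[R]_n)
  (x : 'rV[R]_(n + n)) : 'rV[R]_n :=
  \row_i (if d 0 i < totval Ms Md a x i then 1 else 0).

Definition sysmx (R : realType) (n : nat) (Ms Md : 'M[R]_n) (xi : 'rV[R]_n)
  : 'M[R]_(n + n) :=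
  1%:M - diag_mx (row_mx xi (const_mx 1 - xi)) *m block_mx Ms Md Ms Md.

Definition rhsmx (R : realType) (n : nat) (xi : 'rV[R]_n) : 'M[R]_(n + n, n) :=
  col_mx (diag_mx xi) (diag_mx (const_mx 1 - xi)).

From mathcomp Require Import all_boot all_order all_algebra.
From mathcomp Require Import all_classical all_reals all_analysis.
From mathcomp Require Import ring lra.
Set Implicit Arguments. Unset Strict Implicit. Unset Printing Implicit Defensive.
Import Order.TTheory GRing.Theory Num.Theory numFieldNormedType.Exports.
Local Open Scope ring_scope.

(* Where v_i <> d_i, the max and min in g are affine in v_i nearby, so a small
   perturbation h of the external assets leaves the solvency vector xi fixed.
   The affine candidate x*(a) + J h, where
   J = (I - diag(xi; 1 - xi) [[Ms, Md]; [Ms, Md]])^-1 (diag xi; diag (1 - xi)),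
   solves the fixed-point equation at a + h and is nonnegative, hence
   equals x*(a + h) by uniqueness; a locally affine map is differentiable with
   that Jacobian.  The matrix is invertible because a kernel vector produces
   w = C w with C = Ms diag(xi) + Md diag(1 - xi) nonnegative with column sums
   below 1, and summing |w_i| over i forces w = 0. *)

Section substochastic.
Context {R : realFieldType} {n : nat}.

Definition substochastic (A : 'M[R]_n) : Prop :=
  (forall i j, 0 <= A i j) /\ (forall j, \sum_i A i j < 1).

Lemma substochastic_fixed_eq0 (A : 'M[R]_n) (w : 'rV[R]_n) :
  substochastic A -> w *m A^T = w -> w = 0.
Proof.
move=> [A0 A1] wA.
have w_dom i : `|w 0 i| <= \sum_j A i j * `|w 0 j|.
  rewrite -{1}wA mxE (le_trans (ler_norm_sum _ _ _)) // ler_sum // => j _.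
  by rewrite normrM mxE (ger0_norm (A0 i j)) mulrC.
have mass_ge0 j : 0 <= (1 - \sum_i A i j) * `|w 0 j|.
  by rewrite mulr_ge0 // subr_ge0 ltW.
have mass_eq0 : \sum_j (1 - \sum_i A i j) * `|w 0 j| = 0.
  apply/eqP; rewrite eq_le sumr_ge0 // andbT.
  under eq_bigr do rewrite mulrBl mul1r.
  rewrite sumrB subr_le0 (le_trans (ler_sum _ (fun i _ => w_dom i))) //.
  by rewrite exchange_big /=; apply: ler_sum => j _; rewrite mulr_suml.
apply/rowP => j; rewrite mxE; apply/eqP; rewrite -normr_eq0.
have /eqP := @psumr_eq0P _ _ _ _ (fun k _ => mass_ge0 k) mass_eq0 j isT.
rewrite mulf_eq0 subr_eq0 => /orP[/eqP A1j|//].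
by have := A1 j; rewrite -A1j ltxx.
Qed.

Lemma substochastic_mix (A B : 'M[R]_n) (t : 'rV[R]_n) :
  substochastic A -> substochastic B -> (forall j, 0 <= t 0 j <= 1) ->
  substochastic (A *m diag_mx t + B *m diag_mx (const_mx 1 - t)).
Proof.
move=> [A0 A1] [B0 B1] t01; split=> [i j|j].
  have /andP[t0 t1] := t01 j.
  by rewrite !mul_mx_diag !mxE addr_ge0 ?mulr_ge0 ?subr_ge0.
under eq_bigr do rewrite !mul_mx_diag !mxE.
rewrite big_split /= -!mulr_suml.
move: (A1 j) (B1 j) (t01 j) => a1 b1 /andP[t0 t1].
have [->|t_neq0] := eqVneq (t 0 j) 0; first lra.
have : 0 < (1 - \sum_i A i j) * t 0 j.
  by rewrite mulr_gt0 ?subr_gt0 // lt0r t_neq0.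
have : 0 <= (1 - \sum_i B i j) * (1 - t 0 j).
  by rewrite mulr_ge0 ?subr_ge0 // ltW.
lra.
Qed.

End substochastic.

Lemma mulmxr_continuous (R : numFieldType) m n (K : 'M[R]_(m, n)) :
  continuous (fun h : 'rV[R]_m => h *m K).
Proof.
under [X in continuous X]funext => h do rewrite mulmx_sum_row.
apply: continuous_big => [|i _]; first exact: add_continuous.
move=> h; apply: (@continuousZr_tmp _ _ _ (fun h : 'rV[R]_m => h 0 i)).
exact: coord_continuous.
Qed.

Lemma near0_mulmx_lt (R : numFieldType) m n (W : 'M[R]_(m, n)) (e : 'I_n -> R) :
  (forall j, 0 < e j) ->
  \forall h \near (0 : 'rV[R]_m), forall j, `|(h *m W) 0 j| < e j.
Proof.
move=> e_gt0; apply: (@filter_forall _ _ _ (nbhs (0 : 'rV[R]_m))) => j.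
have := continuous_comp (@mulmxr_continuous _ _ _ W 0)
  (@coord_continuous R 1 n 0 j _).
by rewrite /prop_for /continuous_at /= mul0mx mxE => /cvgr0_norm_lt; apply.
Qed.

Lemma jacobian_locally_affine (R : numFieldType) m n
    (f : 'rV[R]_m -> 'rV[R]_n) (a : 'rV[R]_m) (K : 'M[R]_(m, n)) :
  (\forall h \near (0 : 'rV[R]_m), f (h + a) = f a + h *m K) ->
  differentiable f a /\ jacobian f a = K.
Proof.
move=> f_affine.
have f_expand : f \o shift a = cst (f a) + mulmxr K +o_ (0 : 'rV[R]_m) id.
  apply/eqaddoP => e e_gt0; near=> h.
  by rewrite !fctE /= (near f_affine h) // subrr normr0 mulr_ge0 // ltW.
have K_cont : continuous (mulmxr K : 'rV[R]_m -> 'rV[R]_n).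
  exact: mulmxr_continuous.
have df := diff_unique K_cont f_expand.
split; first by apply/diff_locallyP; rewrite df.
by apply/matrixP => i j; rewrite /jacobian mxE df /= -rowE mxE.
Unshelve. all: by end_near. Qed.

Lemma max0_min_shift (R : realDomainType) (v d w : R) : `|w| < `|v - d| ->
  let t : R := if d < v then 1 else 0 in
  Num.max 0 (v + w - d) = Num.max 0 (v - d) + w * t /\
  Num.min d (v + w) = Num.min d v + w * (1 - t).
Proof.
move=> /ltr_normlP [wl wr] /=; case: ltP => dv.
- rewrite gtr0_norm ?subr_gt0 // in wl wr.
  rewrite subrr mulr1 mulr0 addr0 !max_r ?min_l; lra.
- rewrite ler0_norm ?subr_le0 // in wl wr.
  rewrite subr0 mulr1 mulr0 addr0 !max_l ?min_r; lra.
Qed.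

Section model.
Context {R : realType} {n : nat} (Ms Md : 'M[R]_n) (d : 'rV[R]_n).

Lemma crossholding_substochastic (M : 'M[R]_n) :
  crossholding M -> substochastic M.
Proof. by case. Qed.

Lemma solv01 (a : 'rV[R]_n) (x : 'rV[R]_(n + n)) j :
  0 <= solv Ms Md d a x 0 j <= 1.
Proof. by rewrite mxE; case: ifP; rewrite ?lexx ?ler01. Qed.

Lemma sysmx_tr_fixpoint (xi ds dr D : 'rV[R]_n) :
  row_mx ds dr *m (sysmx Ms Md xi)^T = D *m (rhsmx xi)^T ->
  let w := D + ds *m Ms^T + dr *m Md^T in
  ds = w *m diag_mx xi /\ dr = w *m diag_mx (const_mx 1 - xi).
Proof.
rewrite /sysmx /rhsmx linearB /= trmx1 trmx_mul tr_diag_mx mulmxBr mulmx1.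
rewrite diag_mx_row tr_block_mx mulmxA !mul_row_block tr_col_mx !tr_diag_mx.
rewrite mul_mx_row !mulmx0 !addr0 !add0r opp_row_mx add_row_mx.
move=> /eq_row_mx[Es Er]; split.
  by rewrite -addrA mulmxDl -Es subrK.
by rewrite -addrA mulmxDl -Er subrK.
Qed.

Lemma sysmx_unit (xi : 'rV[R]_n) :
  crossholding Ms -> crossholding Md -> (forall j, 0 <= xi 0 j <= 1) ->
  sysmx Ms Md xi \in unitmx.
Proof.
move=> /crossholding_substochastic Ms_sub /crossholding_substochastic Md_sub.
move=> xi01.
rewrite -unitmx_tr -row_free_unit -kermx_eq0; apply/eqP/row_matrixP => k.
rewrite row0; set u := row k _.
have /sysmx_tr_fixpoint[] :
    row_mx (lsubmx u) (rsubmx u) *m (sysmx Ms Md xi)^T = 0 *m (rhsmx xi)^T.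
  by rewrite hsubmxK mul0mx /u -row_mul mulmx_ker row0.
rewrite add0r; set w := _ + _ => Es Er.
have w0 : w = 0.
  apply: (substochastic_fixed_eq0 (substochastic_mix Ms_sub Md_sub xi01)).
  by rewrite linearD /= !trmx_mul !tr_diag_mx mulmxDr !mulmxA -Es -Er.
by rewrite -[u]hsubmxK Es Er w0 !mul0mx row_mx0.
Qed.

Lemma totvalE (a : 'rV[R]_n) (x : 'rV[R]_(n + n)) i :
  totval Ms Md a x i = (a + lsubmx x *m Ms^T + rsubmx x *m Md^T) 0 i.
Proof.
rewrite /totval !mxE; congr (_ + _ + _); apply: eq_bigr => j _.
  by rewrite !mxE mulrC.
by rewrite !mxE mulrC.
Qed.

Lemma totvalD (a h : 'rV[R]_n) (x dl : 'rV[R]_(n + n)) i :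
  totval Ms Md (h + a) (x + dl) i =
  totval Ms Md a x i + (h + lsubmx dl *m Ms^T + rsubmx dl *m Md^T) 0 i.
Proof.
have addE (X Y : 'rV[R]_n) : X 0 i + Y 0 i = (X + Y) 0 i by rewrite mxE.
rewrite !totvalE addE; congr (fun X : 'rV[R]_n => X 0 i).
rewrite !linearD /= !mulmxDl.
by apply/rowP => j; rewrite !mxE; ring.
Qed.

Lemma ext_le_totval (a : 'rV[R]_n) (x : 'rV[R]_(n + n)) i :
  crossholding Ms -> crossholding Md -> (forall k, 0 <= x 0 k) ->
  a 0 i <= totval Ms Md a x i.
Proof.
move=> [_ [Ms0 _]] [_ [Md0 _]] x0.
by rewrite /totval -addrA lerDl addr_ge0 // sumr_ge0 // => j _;
  rewrite mulr_ge0 ?mxE.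
Qed.

Lemma gmap_ge0 (b : 'rV[R]_n) (y : 'rV[R]_(n + n)) k :
  (forall i, 0 <= d 0 i) -> (forall i, 0 <= totval Ms Md b y i) ->
  0 <= gmap Ms Md d b y 0 k.
Proof.
move=> d0 v0; rewrite /gmap; case: (split_ordP k) => j ->.
  by rewrite row_mxEl mxE le_max lexx.
by rewrite row_mxEr mxE le_min d0 v0.
Qed.

Lemma gmap_shift_fixpoint (b h : 'rV[R]_n) (x dl : 'rV[R]_(n + n)) :
  x = gmap Ms Md d b x ->
  let xi := solv Ms Md d b x in
  let w := h + lsubmx dl *m Ms^T + rsubmx dl *m Md^T in
  lsubmx dl = w *m diag_mx xi -> rsubmx dl = w *m diag_mx (const_mx 1 - xi) ->
  (forall i, `|w 0 i| < `|totval Ms Md b x i - d 0 i|) ->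
  x + dl = gmap Ms Md d (h + b) (x + dl).
Proof.
move=> x_fix xi w dl_s dl_r w_small.
have x_s i : lsubmx x 0 i = Num.max 0 (totval Ms Md b x i - d 0 i).
  by rewrite {1}x_fix /gmap row_mxKl mxE.
have x_r i : rsubmx x 0 i = Num.min (d 0 i) (totval Ms Md b x i).
  by rewrite {1}x_fix /gmap row_mxKr mxE.
rewrite /gmap -[LHS]hsubmxK linearD /= [rsubmx (x + dl)]linearD /=.
congr row_mx; apply/rowP => i; rewrite [LHS]mxE [RHS]mxE totvalD -/w.
  have [-> _] := max0_min_shift (w_small i).
  by rewrite x_s dl_s mul_mx_diag /xi /solv !mxE.
have [_ ->] := max0_min_shift (w_small i).
by rewrite x_r dl_r mul_mx_diag /xi /solv !mxE.
Qed.

End model.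

Section solution_map.
Context {R : realType} {n : nat} (Ms Md : 'M[R]_n) (d : 'rV[R]_n).
Variable xs : 'rV[R]_n -> 'rV[R]_(n + n).
Hypotheses (Ms_cross : crossholding Ms) (Md_cross : crossholding Md).
Hypothesis d_gt0 : forall i, 0 < d 0 i.
Hypothesis xs_spec : forall b : 'rV[R]_n, (forall i, 0 < b 0 i) ->
  [/\ xs b = gmap Ms Md d b (xs b), (forall k, 0 <= xs b 0 k) &
      forall y : 'rV[R]_(n + n),
        (forall k, 0 <= y 0 k) -> y = gmap Ms Md d b y -> y = xs b].
Variable a : 'rV[R]_n.
Hypothesis a_gt0 : forall i, 0 < a 0 i.
Hypothesis off_kink : forall i, totval Ms Md a (xs a) i != d 0 i.

Let xi := solv Ms Md d a (xs a).

Lemma xs_locally_affine :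
  \forall h \near (0 : 'rV[R]_n),
    xs (h + a) = xs a + h *m (invmx (sysmx Ms Md xi) *m rhsmx xi)^T.
Proof.
set K := _^T.
have [xa_fix xa_ge0 _] := xs_spec a_gt0.
pose v i := totval Ms Md a (xs a) i.
pose W := 1%:M + lsubmx K *m Ms^T + rsubmx K *m Md^T.
(* Below this margin no firm changes solvency status, and both a + h and the
   candidate fixed point stay nonnegative. *)
have margin_gt0 i : 0 < Num.min `|v i - d 0 i| (a 0 i).
  by rewrite lt_min normr_gt0 subr_eq0 off_kink a_gt0.
have h_small := near0_mulmx_lt 1%:M a_gt0.
have w_small := near0_mulmx_lt W margin_gt0.
near=> h.
pose dl := h *m K.
have wE : h + lsubmx dl *m Ms^T + rsubmx dl *m Md^T = h *m W.
  rewrite /W /dl -[K]hsubmxK mul_mx_row row_mxKl row_mxKr.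
  by rewrite !mulmxDr mulmx1 !mulmxA hsubmxK.
have /sysmx_tr_fixpoint[dl_s dl_r] :
    row_mx (lsubmx dl) (rsubmx dl) *m (sysmx Ms Md xi)^T = h *m (rhsmx xi)^T.
  rewrite hsubmxK /dl /K -mulmxA -trmx_mul mulKVmx //.
  by apply: sysmx_unit => // j; exact: solv01.
have w_lt : forall i, `|(h *m W) 0 i| < Num.min `|v i - d 0 i| (a 0 i).
  by near: h; exact: w_small.
have y_fix : xs a + dl = gmap Ms Md d (h + a) (xs a + dl).
  apply: gmap_shift_fixpoint dl_s dl_r _ => // i.
  by rewrite wE; have := w_lt i; rewrite lt_min => /andP[].
have h_lt : forall i, `|(h *m 1%:M) 0 i| < a 0 i by near: h; exact: h_small.
have b_gt0 i : 0 < (h + a) 0 i.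
  by have := h_lt i; rewrite mulmx1 mxE ltr_norml => /andP[]; lra.
have [_ _ xs_uniq] := xs_spec b_gt0.
apply/esym/xs_uniq => // k; rewrite y_fix.
apply: gmap_ge0 => i; first exact: ltW.
rewrite totvalD wE.
have := w_lt i; rewrite lt_min => /andP[_ /ltr_normlP[w_gt _]].
have := ext_le_totval a i Ms_cross Md_cross xa_ge0; rewrite -/(v i); lra.
Unshelve. all: by end_near. Qed.

End solution_map.

Theorem mainTheorem2 (R : realType) (n : nat) (Ms Md : 'M[R]_n)
  (d : 'rV[R]_n) (xs : 'rV[R]_n -> 'rV[R]_(n + n)) (a : 'rV[R]_n) :
  crossholding Ms -> crossholding Md ->
  (forall i, 0 < d 0 i) ->
  (forall b : 'rV[R]_n, (forall i, 0 < b 0 i) ->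
     [/\ xs b = gmap Ms Md d b (xs b),
         (forall k, 0 <= xs b 0 k) &
         (forall y : 'rV[R]_(n + n), (forall k, 0 <= y 0 k) -> y = gmap Ms Md d b y -> y = xs b)]) ->
  (forall i, 0 < a 0 i) ->
  (forall i, totval Ms Md a (xs a) i != d 0 i) ->
  let xi := solv Ms Md d a (xs a) in
  sysmx Ms Md xi \in unitmx /\
  (differentiable xs a /\
   jacobian xs a = (invmx (sysmx Ms Md xi) *m rhsmx xi)^T).
Proof.
move=> Ms_cross Md_cross d_gt0 xs_spec a_gt0 off_kink xi.
split; first exact: sysmx_unit Ms_cross Md_cross (solv01 Ms Md d a (xs a)).
exact: jacobian_locally_affine
  (xs_locally_affine Ms_cross Md_cross d_gt0 xs_spec a_gt0 off_kink).
Qed.
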